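(* Let $\xi\in\mathcal N$. If $\xi\cap(x+Q_\sigma)\ne\emptyset$ for all $x\in\mathbb Z^d$ and all $\sigma\in\{-1,+1\}^d$, then $\xi\in\mathcal N_{\rm pol}$.
   Context: $\mathcal N$ is the set of locally finite subsets of $\mathbb R^d$. For $\xi\in\mathcal N$ and $x\in\xi$, $\mathrm{Vor}(x|\xi)=\{y\in\mathbb R^d:|y-x|\le|y-z|\ \forall z\in\xi\}$. $\mathcal N_{\rm pol}$ is the set of $\xi\in\mathcal N$ such that $\mathrm{Vor}(x|\xi)$ is a convex polytope (equivalently a bounded polyhedron, i.e. a bounded intersection of finitely many closed half-spaces) for every $x\in\xi$. For $\sigma\in\{-1,+1\}^d$, the open orthant is $Q_\sigma=\{x\in\mathbb R^d:\sigma_ix_i>0,\ 1\le i\le d\}$. *)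

From HB Require Import structures.
From mathcomp Require Import all_boot all_order all_algebra.
From mathcomp Require Import boolp classical_sets cardinality reals.
Set Implicit Arguments. Unset Strict Implicit. Unset Printing Implicit Defensive.
Import Order.TTheory GRing.Theory Num.Theory.
Local Open Scope ring_scope.
Local Open Scope classical_set_scope.

Definition pt (R : realType) (d : nat) := 'I_d -> R.

Definition enorm (R : realType) (d : nat) (y : pt R d) : R :=
  Num.sqrt (\sum_(i < d) y i ^+ 2).
Definition edist (R : realType) (d : nat) (y z : pt R d) : R :=
  enorm (fun i => y i - z i).

Definition bounded_set (R : realType) (d : nat) (S : set (pt R d)) : Prop :=
  exists M : R, forall y, S y -> enorm y <= M.

Definition locally_finite (R : realType) (d : nat) (xi : set (pt R d)) : Prop :=
  forall B : set (pt R d), bounded_set B -> finite_set (xi `&` B).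

Definition Vor (R : realType) (d : nat) (x : pt R d) (xi : set (pt R d))
  : set (pt R d) :=
  [set y | forall z, xi z -> edist y x <= edist y z].

Definition halfspace (R : realType) (d : nat) (a : pt R d) (b : R)
  : set (pt R d) :=
  [set y | \sum_(i < d) a i * y i <= b].

Definition polytope (R : realType) (d : nat) (P : set (pt R d)) : Prop :=
  bounded_set P /\
  exists (n : nat) (a : 'I_n -> pt R d) (b : 'I_n -> R),
    (forall k, a k <> (fun _ => 0)) /\
    P = [set y | forall k : 'I_n, halfspace (a k) (b k) y].

Definition N_pol (R : realType) (d : nat) (xi : set (pt R d)) : Prop :=
  locally_finite xi /\ forall x, xi x -> polytope (Vor x xi).

(* Open orthant Q_sigma, sigma in {-1,+1}^d encoded as booleans (true = +1). *)
Definition sgn_of (R : realType) (b : bool) : R := if b then 1 else -1.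
Definition orthant (R : realType) (d : nat) (sigma : 'I_d -> bool)
  : set (pt R d) :=
  [set y | forall i, 0 < sgn_of R (sigma i) * y i].

Definition translate (R : realType) (d : nat) (x : pt R d) (Q : set (pt R d))
  : set (pt R d) := [set y | Q (fun i => y i - x i)].

Definition int_pt (R : realType) (d : nat) (z : 'I_d -> int) : pt R d :=
  fun i => (z i)%:~R.

From mathcomp Require Import all_boot all_order all_algebra.
From mathcomp Require Import boolp classical_sets cardinality reals.
From mathcomp Require Import finmap.
From mathcomp Require Import ring lra.
Local Open Scope ring_scope.
Local Open Scope classical_set_scope.
Import Order.TTheory GRing.Theory Num.Theory.
Set Implicit Arguments. Unset Strict Implicit.

(* For every sign pattern s pick a point P s of xi lying at least 1 away from
   x in each coordinate, in the direction given by s.  If y is in the cell of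
   x, take s to be the sign pattern of y - x: then <y - x, P s - x> bounds the
   l1 norm of y - x, and y lying on x's side of the bisector of x and P s
   bounds the cell.  A point q of xi with |q - x|_1 large enough has its
   bisector outside this bounded region, so by local finiteness only finitely
   many bisectors cut out the cell. *)

Section Geometry.
Variables (R : realType) (d : nat).
Implicit Types (v w x y p : pt R d).

Definition sub x y : pt R d := fun i => x i - y i.
Definition dot v w : R := \sum_(i < d) v i * w i.
Definition sq v : R := \sum_(i < d) v i ^+ 2.
Definition L1 v : R := \sum_(i < d) `|v i|.

Lemma L1_ge0 v : 0 <= L1 v.
Proof. by apply: sumr_ge0 => i _. Qed.

Lemma sq_ge0 v : 0 <= sq v.
Proof. by apply: sumr_ge0 => i _; rewrite sqr_ge0. Qed.

Lemma normr_le_L1 v i : `|v i| <= L1 v.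
Proof. by rewrite /L1 (bigD1 i) //= lerDl sumr_ge0. Qed.

Lemma enorm_le_L1 v : enorm v <= L1 v.
Proof.
rewrite /enorm -[leRHS]ger0_norm ?L1_ge0 // -sqrtr_sqr ler_sqrt ?sqr_ge0 //.
rewrite expr2 mulr_sumr; apply: ler_sum => i _.
by rewrite -real_normK ?num_real // expr2 ler_wpM2r ?normr_le_L1.
Qed.

Lemma L1_le_subD y x : L1 y <= L1 (sub y x) + L1 x.
Proof.
rewrite /L1 -big_split; apply: ler_sum => i _ /=.
by have := ler_normD (y i - x i) (x i); rewrite subrK.
Qed.

Lemma dot_le_L1 v w : dot v w <= L1 v * L1 w.
Proof.
rewrite /dot [L1 w]/L1 mulr_sumr; apply: ler_sum => i _.
by rewrite (le_trans (ler_norm _)) // normrM ler_wpM2r ?normr_le_L1.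
Qed.

Lemma L1_sqr_le v : L1 v ^+ 2 <= d%:R * sq v.
Proof.
have twice_rhs : 2 * (d%:R * sq v) =
    \sum_(i < d) \sum_(j < d) (`|v i| ^+ 2 + `|v j| ^+ 2).
  have sqE : \sum_(i < d) `|v i| ^+ 2 = sq v.
    by apply: eq_bigr => i _; rewrite real_normK ?num_real.
  under eq_bigr do rewrite big_split /= sumr_const card_ord -mulr_natl.
  by rewrite big_split /= -mulr_sumr sqE sumr_const card_ord -mulr_natl; ring.
rewrite -(ler_pM2l (_ : 0 < 2)) // twice_rhs expr2 {1}/L1 mulr_suml mulr_sumr.
apply: ler_sum => i _; rewrite /L1 !mulr_sumr; apply: ler_sum => j _.
by have := sqr_ge0 (`|v i| - `|v j|); rewrite sqrrB; lra.
Qed.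

Lemma edist_le_bisector y x p :
  (edist y x <= edist y p) = (2 * dot (sub y x) (sub p x) <= sq (sub p x)).
Proof.
rewrite /edist /enorm ler_sqrt; last by apply: sumr_ge0 => i _; rewrite sqr_ge0.
have -> : \sum_(i < d) (y i - p i) ^+ 2 = \sum_(i < d) (y i - x i) ^+ 2
    - 2 * dot (sub y x) (sub p x) + sq (sub p x).
  rewrite /sq /dot /sub mulr_sumr -sumrB -big_split /=.
  by apply: eq_bigr => i _; ring.
by rewrite -addrA lerDl addrC subr_ge0.
Qed.

Lemma edist_le_halfspace y x p :
  edist y x <= edist y p <-> halfspace (sub p x) ((sq p - sq x) / 2) y.
Proof.
rewrite edist_le_bisector /halfspace /= -/(dot (sub p x) y) ler_pdivlMr //.
rewrite -subr_ge0 -[in X in _ <-> X]subr_ge0.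
suff -> : sq (sub p x) - 2 * dot (sub y x) (sub p x) =
    sq p - sq x - dot (sub p x) y * 2 by [].
rewrite /sq /dot /sub mulr_suml mulr_sumr -!sumrB; apply: eq_bigr => i _; ring.
Qed.

Lemma L1_le_dot_orthant (s : 'I_d -> bool) v w :
  (forall i, 0 <= sgn_of R (s i) * v i) ->
  (forall i, 1 <= sgn_of R (s i) * w i) -> L1 v <= dot v w.
Proof.
move=> sv sw; apply: ler_sum => i _; move: (sv i) (sw i); rewrite /sgn_of.
case: (s i); rewrite ?mul1r ?mulN1r => v0 w1.
- by rewrite ger0_norm //; nra.
- by rewrite ler0_norm -?oppr_ge0 //; nra.
Qed.

Lemma far_point_bisector v w (K : R) :
  2 * L1 v <= K -> d%:R * K < L1 w -> 2 * dot v w < sq w.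
Proof.
move=> vK far; have K0 : 0 <= K by have := L1_ge0 v; lra.
have w0 : 0 < L1 w by apply: le_lt_trans far; rewrite mulr_ge0.
have dot_le : 2 * dot v w <= K * L1 w.
  rewrite (le_trans (ler_wpM2l _ (dot_le_L1 v w))) //.
  by rewrite mulrA ler_wpM2r ?L1_ge0.
have := L1_sqr_le w; rewrite expr2.
have : d%:R * K * L1 w < L1 w * L1 w by rewrite ltr_pM2r.
have : 0 <= d%:R :> R by [].
nra.
Qed.

Lemma finite_halfspaces (S : set (pt R d)) (a : pt R d -> pt R d)
    (b : pt R d -> R) :
  finite_set S -> (forall p, S p -> a p <> (fun _ => 0)) ->
  exists n (a' : 'I_n -> pt R d) (b' : 'I_n -> R),
    (forall k, a' k <> (fun _ => 0)) /\
    [set y | forall p, S p -> halfspace (a p) (b p) y] =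
    [set y | forall k, halfspace (a' k) (b' k) y].
Proof.
move=> /finite_fsetP[X ->] a_neq0; set s := (X : seq _).
exists (size s), (fun k => a (nth (fun _ => 0) s k)),
  (fun k => b (nth (fun _ => 0) s k)).
split=> [k|]; first by apply/a_neq0/mem_nth.
apply/seteqP; split=> y /= hy => [k|p Xp]; first by apply/hy/mem_nth.
by have := hy (Ordinal (etrans (index_mem p s) Xp)); rewrite /= nth_index.
Qed.

End Geometry.

Section VoronoiCell.
Variables (R : realType) (d : nat) (xi : set (pt R d)) (x : pt R d).

Lemma orthant_witnesses :
  (forall (z : 'I_d -> int) (sigma : 'I_d -> bool),
      xi `&` translate (@int_pt R d z) (@orthant R d sigma) !=set0) ->
  exists P : {ffun 'I_d -> bool} -> pt R d,
    (forall s, xi (P s)) /\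
    forall (s : {ffun 'I_d -> bool}) i, 1 <= sgn_of R (s i) * sub (P s) x i.
Proof.
move=> meets.
pose z (s : 'I_d -> bool) i :=
  if s i then Num.ceil (x i) + 1 else Num.floor (x i) - 1.
have [P HP] := choice (fun s : {ffun 'I_d -> bool} => meets (z s) s).
exists P; split=> [s|s i]; first by case: (HP s).
case: (HP s) => _ /(_ i); rewrite /int_pt /sgn_of /z /sub; case: (s i) => /=.
- by rewrite !mul1r intrD => h; have := ceil_ge (x i); lra.
- by rewrite !mulN1r intrB => h; have := floor_le (x i); lra.
Qed.

Definition Vor_within (M : R) : set (pt R d) :=
  [set y | forall p, xi p -> L1 (sub p x) <= M -> edist y x <= edist y p].

Lemma Vor_within_halfspaces M : locally_finite xi ->
  exists n (a : 'I_n -> pt R d) (b : 'I_n -> R),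
    (forall k, a k <> (fun _ => 0)) /\
    Vor_within M = [set y | forall k, halfspace (a k) (b k) y].
Proof.
move=> lf; pose B := [set p | p <> x /\ L1 (sub p x) <= M].
have B_bounded : bounded_set B.
  exists (M + L1 x) => p [_ pM].
  by have := enorm_le_L1 p; have := L1_le_subD p x; lra.
have [|n [a [b [a_neq0 cut_out]]]] :=
  finite_halfspaces (a := fun p => sub p x) (fun p => (sq p - sq x) / 2)
    (lf B B_bounded).
  move=> p [_ [px _]] sub0; apply/px/funext => i; apply/eqP.
  by rewrite -subr_eq0; apply/eqP; exact: (congr1 (fun f => f i) sub0).
exists n, a, b; split=> //; rewrite -cut_out; apply/seteqP.
split=> y /= Vy => [p [xip [_ pM]]|p xip pM].
  by apply/edist_le_halfspace/Vy.
have [-> //|px] := eqVneq p x.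
by apply/edist_le_halfspace/Vy; split=> //; split=> //; apply/eqP.
Qed.

Variable P : {ffun 'I_d -> bool} -> pt R d.
Hypothesis xi_P : forall s, xi (P s).
Hypothesis P_orthant :
  forall (s : {ffun 'I_d -> bool}) i, 1 <= sgn_of R (s i) * sub (P s) x i.

Let K := \sum_(s : {ffun 'I_d -> bool}) sq (sub (P s) x).
(* [d K] makes every point beyond [M] irrelevant (far_point_bisector), and
   the second summand keeps all witnesses [P s] within [M]. *)
Let M := d%:R * K + \sum_(s : {ffun 'I_d -> bool}) L1 (sub (P s) x).

Lemma Vor_within_L1_le y : Vor_within M y -> 2 * L1 (sub y x) <= K.
Proof.
move=> Vy; pose s := [ffun i => 0 <= y i - x i].
have bisector : 2 * dot (sub y x) (sub (P s) x) <= sq (sub (P s) x).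
  rewrite -edist_le_bisector; apply: Vy => //.
  rewrite /M (bigD1 s) //= addrCA lerDl addr_ge0 ?mulr_ge0 ?sumr_ge0 // => t _.
  - exact: sq_ge0.
  - exact: L1_ge0.
have L1_le_dot : L1 (sub y x) <= dot (sub y x) (sub (P s) x).
  apply: (L1_le_dot_orthant (s := s)) => // i; rewrite ffunE /sgn_of /sub.
  by case: (lerP 0 (y i - x i)) => h; rewrite ?mul1r ?mulN1r; lra.
have sq_le_K : sq (sub (P s) x) <= K.
  by rewrite /K (bigD1 s) //= lerDl sumr_ge0 // => t _; apply: sq_ge0.
lra.
Qed.

Lemma Vor_eq_within : Vor x xi = Vor_within M.
Proof.
apply/seteqP; split=> y Vy q xiq; first by move=> _; apply: Vy.
have [/(Vy q xiq) //|far] := leP (L1 (sub q x)) M.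
rewrite edist_le_bisector ltW // (far_point_bisector (Vor_within_L1_le Vy)) //.
apply: le_lt_trans far; rewrite lerDl sumr_ge0 // => s _; exact: L1_ge0.
Qed.

Lemma bounded_Vor : bounded_set (Vor x xi).
Proof.
exists (K / 2 + L1 x) => y; rewrite Vor_eq_within => /Vor_within_L1_le yK.
by have := enorm_le_L1 y; have := L1_le_subD y x; lra.
Qed.

Lemma polytope_Vor : locally_finite xi -> polytope (Vor x xi).
Proof.
move=> lf; split; first exact: bounded_Vor.
by rewrite Vor_eq_within; exact: Vor_within_halfspaces.
Qed.

End VoronoiCell.

Theorem lemma2p3 (R : realType) (d : nat) (xi : set (pt R d)) :
  locally_finite xi ->
  (forall (z : 'I_d -> int) (sigma : 'I_d -> bool),
      xi `&` translate (@int_pt R d z) (@orthant R d sigma) !=set0) ->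
  N_pol xi.
Proof.
move=> lf meets; split=> // x _.
have [P [xi_P P_orthant]] := orthant_witnesses x meets.
exact: polytope_Vor.
Qed.
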